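(* Let $p\in(0,1)$ and let $(\lambda_n)_{n\ge1}$ be a sequence with $\lambda_1=1$ and $0\le\lambda_n\le\lambda_{n-1}$ for all $n>1$. Let $r_1,r_2,\dots$ be $\{0,1\}$-valued random variables with $\Pr(r_1=1)=p$ and, for every $n\ge2$, $\Pr(r_n=1\mid r_1,\dots,r_{n-1})=\lambda_n p+(1-\lambda_n)\bar p_{n-1}$, where $\bar p_m=\frac1m\sum_{i=1}^m r_i$. For arbitrary (deterministic) values $\hat\lambda_i\in(0,1]$, $i\ge2$, define $\hat r_1=r_1$ and $\hat r_i=\frac{r_i-(1-\hat\lambda_i)\bar p_{i-1}}{\hat\lambda_i}$ for $i\ge2$, and for weights $\omega_1,\dots,\omega_n>0$ define $\hat p_n=\frac{\sum_{i=1}^n\omega_i\hat r_i}{\sum_{i=1}^n\omega_i}$. Then $\mathbb{E}[\hat r_i]=p$ for every $i\ge1$, and consequently $\mathbb{E}[\hat p_n]=p$.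
   Context: $\hat\lambda_i$ is an estimate of $\lambda_i$ (which need not be correct); $\hat r_i$ is the affine correction of the $i$-th rating and $\hat p_n$ the affine (weighted-mean) estimator of $p$. *)

From HB Require Import structures.
From mathcomp Require Import all_boot all_order all_algebra.
From mathcomp Require Import all_classical all_reals all_analysis.
Set Implicit Arguments. Unset Strict Implicit. Unset Printing Implicit Defensive.
Import Order.TTheory GRing.Theory Num.Theory.
Local Open Scope ring_scope.

(* indices are 1-based as in the paper: r 1, r 2, ... ; r 0 is unused *)

Definition pbar {T} {R : realType} (r : nat -> T -> R) (m : nat) (w : T) : R :=
  (\sum_(1 <= i < m.+1) r i w) / m%:R.

Definition rhat {T} {R : realType} (r : nat -> T -> R) (lh : nat -> R)
  (i : nat) (w : T) : R :=
  if (i <= 1)%N then r i w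
  else (r i w - (1 - lh i) * pbar r i.-1 w) / lh i.

Definition phat {T} {R : realType} (r : nat -> T -> R) (lh : nat -> R)
  (om : nat -> R) (n : nat) (w : T) : R :=
  (\sum_(1 <= i < n.+1) om i * rhat r lh i w) / (\sum_(1 <= i < n.+1) om i).

Definition history {T} {R : realType} (r : nat -> T -> R) (h : nat -> bool)
  (n : nat) : set T :=
  [set w | forall i, (1 <= i < n)%N -> r i w = (h i)%:R].

Definition hbar {R : realType} (h : nat -> bool) (m : nat) : R :=
  (\sum_(1 <= i < m.+1) ((h i)%:R : R)) / m%:R.

From HB Require Import structures.
From mathcomp Require Import all_boot all_order all_algebra.
From mathcomp Require Import all_classical all_reals all_analysis.
From mathcomp.algebra_tactics Require Import ring.
Import Order.TTheory GRing.Theory Num.Theory.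
Local Open Scope ring_scope.
Local Open Scope classical_set_scope.

(* Summing the defining identity over all 0/1 histories of length m gives
   Pr(r_(m+1) = 1) = lam_(m+1) p + (1 - lam_(m+1)) (1/m) sum_(i <= m) Pr(r_i = 1),
   so by strong induction Pr(r_n = 1) = p for every n, i.e. E[r_n] = p.
   The estimators r^_i and p^_n are affine combinations of the r_j whose
   coefficients sum to one, hence also have mean p by linearity. *)

Section has_mean.
Context {d} {T : measurableType d} {R : realType} (P : probability T R).

Definition has_mean (f : T -> R) (c : R) : Prop :=
  f \in Lfun P 1 /\ ('E_P[f] = c%:E)%E.

Lemma has_mean_cst c : has_mean (cst c) c.
Proof. by split; [exact: Lfun_cst | exact: expectation_cst]. Qed.

Lemma has_meanD f g a b :
  has_mean f a -> has_mean g b -> has_mean (f \+ g) (a + b).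
Proof.
move=> [fL fE] [gL gE]; split; first exact: rpredD.
by rewrite expectationD // fE gE EFinD.
Qed.

Lemma has_meanZ k f a : has_mean f a -> has_mean (k \o* f) (k * a).
Proof.
move=> [fL fE]; split; last by rewrite expectationZl // fE EFinM.
have -> : k \o* f = k *: f by apply/funext => w /=; rewrite mulrC.
exact: rpredZ.
Qed.

Lemma has_mean_sum (I : eqType) (s : seq I) (F : I -> T -> R) (c : I -> R) :
  (forall i, i \in s -> has_mean (F i) (c i)) ->
  has_mean (fun w => \sum_(i <- s) F i w) (\sum_(i <- s) c i).
Proof.
elim: s => [_|i s IH Fc].
  have -> : (fun w => \sum_(i <- [::]) F i w) = cst 0.
    by apply/funext => w; rewrite big_nil.
  by rewrite big_nil; exact: has_mean_cst.
have -> : (fun w => \sum_(j <- i :: s) F j w) = F i \+ (fun w => \sum_(j <- s) F j w).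
  by apply/funext => w; rewrite big_cons.
rewrite big_cons; apply: has_meanD; first exact/Fc/mem_head.
by apply: IH => j js; apply: Fc; rewrite in_cons js orbT.
Qed.

Lemma has_mean_pbar (r : nat -> T -> R) c m : (0 < m)%N ->
  (forall i, (1 <= i <= m)%N -> has_mean (r i) c) -> has_mean (pbar r m) c.
Proof.
move=> m_gt0 rc.
rewrite [c](_ : _ = m%:R^-1 * \sum_(1 <= i < m.+1) c); last first.
  by rewrite sumr_const_nat subSS subn0 -[c *+ m]mulr_natr mulrC mulfK // pnatr_eq0 -lt0n.
have -> : pbar r m = m%:R^-1 \o* (fun w => \sum_(1 <= i < m.+1) r i w) by [].
apply/has_meanZ/has_mean_sum => i.
by rewrite mem_index_iota ltnS; exact: rc.
Qed.

Lemma has_mean_rhat (r : nat -> T -> R) lh c i : (1 <= i)%N ->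
  ((1 < i)%N -> lh i != 0) ->
  (forall j, (1 <= j <= i)%N -> has_mean (r j) c) -> has_mean (rhat r lh i) c.
Proof.
case: i => [|[|i]] // _ lh_neq0 rc; first by apply: rc.
have lh0 := lh_neq0 isT.
have -> : rhat r lh i.+2 =
    (lh i.+2)^-1 \o* r i.+2 \+ (- (1 - lh i.+2) / lh i.+2) \o* pbar r i.+1.
  by apply/funext => w; rewrite /rhat /=; field.
rewrite [c](_ : _ = (lh i.+2)^-1 * c + (- (1 - lh i.+2) / lh i.+2) * c); last by field.
apply: has_meanD; apply: has_meanZ; first by apply: rc; rewrite leqnn.
by apply: has_mean_pbar => // j /andP[j1 ji]; apply: rc; rewrite j1 ltnW.
Qed.

Lemma has_mean_phat (r : nat -> T -> R) lh om c n :
  \sum_(1 <= i < n.+1) om i != 0 ->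
  (forall i, (1 <= i <= n)%N -> has_mean (rhat r lh i) c) ->
  has_mean (phat r lh om n) c.
Proof.
set S := \sum_(1 <= i < n.+1) om i => S0 rc.
have -> : phat r lh om n =
    (fun w => \sum_(1 <= i < n.+1) ((S^-1 * om i) \o* rhat r lh i) w).
  by apply/funext => w; rewrite /phat mulr_suml; apply: eq_bigr => i _ /=; ring.
rewrite [c](_ : _ = \sum_(1 <= i < n.+1) S^-1 * om i * c); last first.
  by rewrite -mulr_suml -mulr_sumr -/S mulVf ?mul1r.
apply: has_mean_sum => i; rewrite mem_index_iota ltnS => /rc.
exact: has_meanZ.
Qed.

End has_mean.

(* All 0/1 histories on the indices 1..m (they are [false] elsewhere). *)
Fixpoint histories (m : nat) : seq (nat -> bool) :=
  if m is m'.+1 then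
    [seq ([eta h with m |-> true] : nat -> bool) | h <- histories m'] ++
    [seq ([eta h with m |-> false] : nat -> bool) | h <- histories m']
  else [:: fun _ => false].

Section history.
Context {T : Type} {R : realType} (r : nat -> T -> R).

Lemma eq_history h h' k : (forall i, (1 <= i < k)%N -> h i = h' i) ->
  history r h k = history r h' k.
Proof.
by move=> hh'; apply/seteqP; split => w /= H i ik; [rewrite -hh' | rewrite hh']; auto.
Qed.

Lemma history_le1 h k : (k <= 1)%N -> history r h k = setT.
Proof.
move=> k1; apply/seteqP; split => // w _ i /andP[i1 ik].
by move: (leq_trans ik k1); rewrite ltnNge i1.
Qed.

Lemma historyS h k : (1 <= k)%N ->
  history r h k.+1 = history r h k `&` [set w | r k w = (h k)%:R].
Proof.
move=> k1; apply/seteqP; split => w /=.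
- move=> H; split; last by apply: H; rewrite k1 /=.
  by move=> i /andP[i1 ik]; apply: H; rewrite i1 ltnS ltnW.
- move=> [H Hk] i /andP[i1]; rewrite ltnS leq_eqVlt => /orP[/eqP-> //|ik].
  by apply: H; rewrite i1.
Qed.

Lemma history_eta h k b : (1 <= k)%N ->
  history r [eta h with k |-> b] k.+1 = history r h k `&` [set w | r k w = b%:R].
Proof.
move=> k1; rewrite historyS //= eqxx; congr (_ `&` _).
by apply: eq_history => i /andP[_ ik] /=; rewrite ltn_eqF.
Qed.

End history.

Section total_probability.
Context {d} {T : measurableType d} {R : realType} (P : probability T R).
Variable r : nat -> T -> R.
Hypothesis r_meas : forall n, (1 <= n)%N -> measurable_fun setT (r n).
Hypothesis r01 : forall n w, (1 <= n)%N -> r n w = 0 \/ r n w = 1.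

Lemma measurable_level n c : (1 <= n)%N -> measurable [set w | r n w = c].
Proof.
by move=> n1; rewrite -[X in measurable X]setTI; exact: r_meas (measurable_set1 c).
Qed.

Lemma measurable_history h k : measurable (history r h k).
Proof.
elim: k => [|k IH]; first by rewrite history_le1.
have [k0|k1] := leqP k 0; first by rewrite history_le1.
by rewrite historyS //; apply: measurableI => //; exact: measurable_level.
Qed.

Lemma fine_probabilityK A : measurable A -> (fine (P A))%:E = P A.
Proof. by move=> mA; rewrite fineK // fin_num_measure. Qed.

Lemma pr_split_level k B : (1 <= k)%N -> measurable B ->
  fine (P B) =
  fine (P (B `&` [set w | r k w = 1])) + fine (P (B `&` [set w | r k w = 0])).
Proof.
move=> k1 mB; have mBk c := measurableI _ _ mB (measurable_level _ c k1).
rewrite -fineD ?fin_num_measure // -measureU //; last first.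
  apply/seteqP; split => w // [[_ e1] [_ e0]].
  by move: e1; rewrite /= e0 => /eqP; rewrite eq_sym oner_eq0.
congr (fine (P _)); apply/seteqP; split => [w Bw|w [[]|[]] //].
by case: (r01 _ w k1) => e; [right | left].
Qed.

Lemma pr_total m B : measurable B ->
  \sum_(h <- histories m) fine (P (history r h m.+1 `&` B)) = fine (P B).
Proof.
elim: m B => [|m IH] B mB /=; first by rewrite big_seq1 history_le1 // setTI.
have mBm c := measurableI _ _ mB (measurable_level _ c (ltn0Sn m)).
rewrite big_cat !big_map /=.
under eq_bigr => h _ do rewrite history_eta // -setIA.
under [X in _ + X]eq_bigr => h _ do rewrite history_eta // -setIA.
by rewrite !(setIC _ B) !IH // [RHS](pr_split_level m.+1 B).
Qed.

Lemma pr_total_level m i : (1 <= i <= m)%N ->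
  \sum_(h <- histories m) (h i)%:R * fine (P (history r h m.+1)) =
  fine (P [set w | r i w = 1]).
Proof.
move=> /andP[i1 im]; rewrite -(pr_total m _ (measurable_level _ 1 i1)).
apply: eq_bigr => h _; have hi : (1 <= i < m.+1)%N by rewrite i1 ltnS.
case: (boolP (h i)) => [hiT | /negbTE hiF].
- rewrite mul1r; congr (fine (P _)); apply/seteqP; split => [w Hw|w []] //.
  by split => //; rewrite /= (Hw i hi) hiT.
- rewrite mul0r (_ : _ `&` _ = set0) ?measure0 //.
  apply/seteqP; split => w // [Hw] /=; rewrite (Hw i hi) hiF => /eqP.
  by rewrite eq_sym oner_eq0.
Qed.

Lemma pr_total_hbar m :
  \sum_(h <- histories m) hbar h m * fine (P (history r h m.+1)) =
  (\sum_(1 <= i < m.+1) fine (P [set w | r i w = 1])) / m%:R.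
Proof.
under eq_bigr => h _ do rewrite /hbar mulrAC mulr_suml.
rewrite -mulr_suml exchange_big /=; congr (_ / _).
by apply: eq_big_nat => i im; rewrite pr_total_level.
Qed.

Lemma pr_next_level m a b :
  (forall h, P (history r h m.+1 `&` [set w | r m.+1 w = 1]) =
     ((a + b * hbar h m)%:E * P (history r h m.+1))%E) ->
  fine (P [set w | r m.+1 w = 1]) =
  a + b * ((\sum_(1 <= i < m.+1) fine (P [set w | r i w = 1])) / m%:R).
Proof.
move=> Pcond; rewrite -(pr_total m _ (measurable_level _ 1 (ltn0Sn m))).
have step h : fine (P (history r h m.+1 `&` [set w | r m.+1 w = 1])) =
    (a + b * hbar h m) * fine (P (history r h m.+1)).
  by rewrite Pcond -{1}fine_probabilityK //; exact: measurable_history.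
under eq_bigr => h _ do rewrite step mulrDl -mulrA.
rewrite big_split /= -!mulr_sumr pr_total_hbar.
have -> : \sum_(h <- histories m) fine (P (history r h m.+1)) = 1.
  under eq_bigr => h _ do rewrite -[history _ _ _]setIT.
  by rewrite pr_total // probability_setT.
by rewrite mulr1.
Qed.

Lemma has_mean_level n : (1 <= n)%N ->
  has_mean P (r n) (fine (P [set w | r n w = 1])).
Proof.
move=> n1; have mA := measurable_level _ 1 n1; set A := [set w | r n w = 1] in mA *.
have -> : r n = \1_A.
  apply/funext => w; rewrite indicE; case: (r01 _ w n1) => e.
    by rewrite memNset ?e // /A /= e => /eqP; rewrite eq_sym oner_eq0.
  by rewrite mem_set.
split; first exact/Lfun1_integrable/integrable_indic.
by rewrite expectation_indic // fine_probabilityK.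
Qed.

End total_probability.

Lemma mean_recursion_const {R : realType} (q a : nat -> R) p : q 1%N = p ->
  (forall m, (1 <= m)%N ->
     q m.+1 = a m.+1 * p + (1 - a m.+1) * ((\sum_(1 <= i < m.+1) q i) / m%:R)) ->
  forall n, (1 <= n)%N -> q n = p.
Proof.
move=> q1 qS n; elim/ltn_ind: n => -[|[|m]] IH // _.
rewrite qS // (eq_big_nat _ _ (F2 := fun=> p)); last first.
  by move=> i /andP[i1 im]; apply: IH.
by rewrite sumr_const_nat subn1 -[p *+ _]mulr_natr mulfK ?pnatr_eq0 //; ring.
Qed.

Theorem theoremA9 (d : measure_display) (T : measurableType d) (R : realType)
  (P : probability T R) (p : R) (lam lh : nat -> R) (r : nat -> T -> R) :
  0 < p < 1 ->
  lam 1%N = 1 ->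
  (forall n, (1 < n)%N -> 0 <= lam n <= lam n.-1) ->
  (forall n, (1 <= n)%N -> measurable_fun setT (r n)) ->
  (forall n w, (1 <= n)%N -> r n w = 0 \/ r n w = 1) ->
  P [set w | r 1%N w = 1] = p%:E ->
  (forall n (h : nat -> bool), (2 <= n)%N ->
     P (history r h n `&` [set w | r n w = 1]) =
     ((lam n * p + (1 - lam n) * hbar h n.-1)%:E * P (history r h n))%E) ->
  (forall i, (2 <= i)%N -> 0 < lh i <= 1) ->
  (forall i, (1 <= i)%N -> ('E_P[rhat r lh i] = p%:E)%E) /\
  (forall n (om : nat -> R), (1 <= n)%N -> (forall i, (1 <= i <= n)%N -> 0 < om i) ->
     ('E_P[phat r lh om n] = p%:E)%E).
Proof.
(* The constraints on p and lam only make the conditional probabilities lie in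
   [0, 1]; unbiasedness holds without them. *)
move=> _ _ _ r_meas r01 Pr1 Pcond lh_pos.
have Pr_one : forall n, (1 <= n)%N -> fine (P [set w | r n w = 1]) = p.
  apply: (mean_recursion_const _ lam) => [|m m1]; first by rewrite Pr1.
  by apply: pr_next_level => // h; apply: Pcond.
have mean_r n : (1 <= n)%N -> has_mean P (r n) p.
  by move=> n1; rewrite -[X in has_mean _ _ X](Pr_one n n1); exact: has_mean_level.
have mean_rhat i : (1 <= i)%N -> has_mean P (rhat r lh i) p.
  move=> i1; apply: has_mean_rhat => // [i2|j /andP[j1 _]]; last exact: mean_r.
  by have /andP[/gt_eqF-> _] := lh_pos i i2.
split => [i /mean_rhat[] //|n om n1 om_pos].
have sum_om : \sum_(1 <= i < n.+1) om i != 0.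
  rewrite gt_eqF // big_ltn // ltr_pwDl ?om_pos // big_nat_cond.
  apply: sumr_ge0 => i /andP[/andP[i2 i_n] _].
  by apply/ltW/om_pos; rewrite (ltnW i2) -ltnS.
suff [_ ->] : has_mean P (phat r lh om n) p by [].
by apply: has_mean_phat => // i /andP[i1 _]; exact: mean_rhat.
Qed.
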